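(* (i) Let $(\bar x,\bar r)\in\mathbb{R}^n\times\mathbb{R}^2_+$ be a global optimal solution of problem (P2) and suppose $(\bar x,\bar\xi)\in\mathcal{M}(\bar r)$. Then $(\bar x,\bar\lambda)$ with $\bar\lambda:=\bar\xi$ is a global optimal solution of problem (P1). (ii) Suppose there exists a dense subset $\mathbb{D}\subset\mathbb{R}^n\times\mathbb{R}^2_+$ such that $\mathcal{M}(r)\neq\varnothing$ for all $(x,r)\in\mathbb{D}$. Let $(\bar x,\bar\lambda)$ be a global optimal solution of problem (P1) and let $\bar r:=\mathbb{Q}(\bar x)$. Then $(\bar x,\bar r)$ is a global optimal solution of problem (P2).
   Context: Fix $\Psi\in\mathbb{R}^{d\times n}$, linear difference operators $D_1,\dots,D_n$ (matrices with $n$ columns), and $\|x\|_{\mathrm{TV}}:=\sum_{i=1}^n\|D_ix\|_1$. Training data $\Phi_{\mathrm{tr}}\in\mathbb{R}^{m_1\times n}$, $b_{\mathrm{tr}}\in\mathbb{R}^{m_1}$ and validation data $\Phi_{\mathrm{val}}\in\mathbb{R}^{m_2\times n}$, $b_{\mathrm{val}}\in\mathbb{R}^{m_2}$ are given. Let $F(x):=\frac12\|\Phi_{\mathrm{val}}x-b_{\mathrm{val}}\|_2^2$. For $\lambda\in\mathbb{R}^2_+$, $\mathbb{S}_p(\lambda)$ is the set of minimizers over $x\in\mathbb{R}^n$ of $\frac12\|\Phi_{\mathrm{tr}}x-b_{\mathrm{tr}}\|_2^2+\lambda_1\|\Psi x\|_1+\lambda_2\|x\|_{\mathrm{TV}}$;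 for $r\in\mathbb{R}^2_+$, $\mathbb{S}_c(r)$ is the set of minimizers over $x\in\mathbb{R}^n$ of $\frac12\|\Phi_{\mathrm{tr}}x-b_{\mathrm{tr}}\|_2^2$ subject to $\|\Psi x\|_1\le r_1$, $\|x\|_{\mathrm{TV}}\le r_2$. Problem (P1): minimize $F(x)$ over $(x,\lambda)\in\mathbb{R}^n\times\mathbb{R}^2_+$ subject to $x\in\mathbb{S}_p(\lambda)$. Problem (P2): minimize $F(x)$ over $(x,r)\in\mathbb{R}^n\times\mathbb{R}^2_+$ subject to $x\in\mathbb{S}_c(r)$. A global optimal solution is a feasible point whose objective value is $\le$ that of every feasible point. $\mathbb{Q}(x):=(\|\Psi x\|_1,\|x\|_{\mathrm{TV}})\in\mathbb{R}^2_+$. For $r\in\mathbb{R}^2_+$, $\mathcal{M}(r):=\{(x,\xi)\in\mathbb{R}^n\times\mathbb{R}^2_+ : 0\in\Phi_{\mathrm{tr}}^\top(\Phi_{\mathrm{tr}}x-b_{\mathrm{tr}})+\xi_1\Psi^\top\partial\|\cdot\|_1(\Psi x)+\xi_2\sum_{i=1}^n D_i^\top\partial\|\cdot\|_1(D_ix),\ \xi_1(\|\Psi x\|_1-r_1)=0,\ \xi_2(\|x\|_{\mathrm{TV}}-r_2)=0\}$, where $\partial$ is the convex subdifferential. *)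

From HB Require Import structures.
From mathcomp Require Import all_boot all_order all_algebra.
From mathcomp Require Import reals.
Set Implicit Arguments. Unset Strict Implicit. Unset Printing Implicit Defensive.
Import Order.TTheory GRing.Theory Num.Theory.
Local Open Scope ring_scope.

Section Defs.
Variable R : realType.

Definition norm1 k (v : 'cV[R]_k) : R := \sum_(i < k) `|v i 0|.
Definition sqnorm k (v : 'cV[R]_k) : R := \sum_(i < k) (v i 0) ^+ 2.

Definition subdiff k (f : 'cV[R]_k -> R) (y g : 'cV[R]_k) : Prop :=
  forall z : 'cV[R]_k, f y + (g^T *m (z - y)) 0 0 <= f z.

Definition nonneg2 (a : R * R) : Prop := 0 <= a.1 /\ 0 <= a.2.

Variables (n d m1 m2 : nat) (p : 'I_n -> nat).
Variables (Psi : 'M[R]_(d, n)) (Dop : forall i : 'I_n, 'M[R]_(p i, n)).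
Variables (Phitr : 'M[R]_(m1, n)) (btr : 'cV[R]_m1).
Variables (Phival : 'M[R]_(m2, n)) (bval : 'cV[R]_m2).

Definition TV (x : 'cV[R]_n) : R := \sum_(i < n) norm1 (Dop i *m x).
Definition Fval (x : 'cV[R]_n) : R := 2^-1 * sqnorm (Phival *m x - bval).
Definition LStr (x : 'cV[R]_n) : R := 2^-1 * sqnorm (Phitr *m x - btr).
Definition Qmap (x : 'cV[R]_n) : R * R := (norm1 (Psi *m x), TV x).

Definition objP (lam : R * R) (x : 'cV[R]_n) : R :=
  LStr x + lam.1 * norm1 (Psi *m x) + lam.2 * TV x.
Definition Sp (lam : R * R) (x : 'cV[R]_n) : Prop :=
  forall y : 'cV[R]_n, objP lam x <= objP lam y.

Definition feasC (r : R * R) (x : 'cV[R]_n) : Prop :=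
  norm1 (Psi *m x) <= r.1 /\ TV x <= r.2.
Definition Sc (r : R * R) (x : 'cV[R]_n) : Prop :=
  feasC r x /\ forall y : 'cV[R]_n, feasC r y -> LStr x <= LStr y.

Definition P1_feas (x : 'cV[R]_n) (lam : R * R) : Prop := nonneg2 lam /\ Sp lam x.
Definition P1_opt (x : 'cV[R]_n) (lam : R * R) : Prop :=
  P1_feas x lam /\ forall y mu, P1_feas y mu -> Fval x <= Fval y.
Definition P2_feas (x : 'cV[R]_n) (r : R * R) : Prop := nonneg2 r /\ Sc r x.
Definition P2_opt (x : 'cV[R]_n) (r : R * R) : Prop :=
  P2_feas x r /\ forall y s, P2_feas y s -> Fval x <= Fval y.

Definition Mset (r : R * R) (x : 'cV[R]_n) (xi : R * R) : Prop :=
  nonneg2 xi /\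
  (exists (g : 'cV[R]_d) (h : forall i : 'I_n, 'cV[R]_(p i)),
      subdiff (@norm1 d) (Psi *m x) g /\
      (forall i, subdiff (@norm1 (p i)) (Dop i *m x) (h i)) /\
      Phitr^T *m (Phitr *m x - btr) + xi.1 *: (Psi^T *m g)
        + xi.2 *: (\sum_(i < n) (Dop i)^T *m h i) = 0) /\
  xi.1 * (norm1 (Psi *m x) - r.1) = 0 /\
  xi.2 * (TV x - r.2) = 0.

End Defs.

(* Dset is a dense subset of R^n x R^2_+ (with its usual Euclidean topology;
   entrywise eps-closeness generates the same topology). *)
Definition dense_subset (R : realType) (n : nat)
    (Dset : 'cV[R]_n -> R * R -> Prop) : Prop :=
  (forall x r, Dset x r -> nonneg2 r) /\
  (forall (x : 'cV[R]_n) (r : R * R), nonneg2 r -> forall eps : R, 0 < eps ->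
     exists (x' : 'cV[R]_n) (r' : R * R), Dset x' r' /\
       (forall i, `|x i 0 - x' i 0| < eps) /\
       `|r.1 - r'.1| < eps /\ `|r.2 - r'.2| < eps).

(** The constrained problem has polyhedral constraints: the l1 norm of [Psi x]
    and the total variation are both maxima of finitely many linear forms. Hence
    a solution of the constrained least-squares problem is a minimizer of a
    linear form (the gradient) over a polyhedron, and Farkas' lemma yields
    Lagrange multipliers for it; so every point of [S_c(r)] lies in [S_p(mu)] for
    some [mu >= 0], without any constraint qualification. Conversely a KKT point,
    and more generally any [x] in [S_p(lambda)], lies in [S_c(Q(x))]. Both
    bilevel problems therefore have the same feasible lower-level solutions,
    which gives (i) and (ii). *)

From HB Require Import structures.
From mathcomp Require Import all_boot all_order all_algebra.
From mathcomp Require Import reals.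
From mathcomp Require Import ring lra.
From Stdlib Require Import Classical.
Set Implicit Arguments. Unset Strict Implicit. Unset Printing Implicit Defensive.
Import Order.TTheory GRing.Theory Num.Theory.
Local Open Scope ring_scope.

Section Dot.
Variable R : realType.

Definition dot n (u v : 'cV[R]_n) : R := \sum_(i < n) u i 0 * v i 0.

Lemma dotDl n (u v w : 'cV[R]_n) : dot (u + v) w = dot u w + dot v w.
Proof. by rewrite /dot -big_split; apply: eq_bigr => i _; rewrite mxE mulrDl. Qed.

Lemma dotZl n a (u w : 'cV[R]_n) : dot (a *: u) w = a * dot u w.
Proof. by rewrite /dot mulr_sumr; apply: eq_bigr => i _; rewrite mxE mulrA. Qed.

Lemma dotC n (u w : 'cV[R]_n) : dot u w = dot w u.
Proof. by apply: eq_bigr => i _; rewrite mulrC. Qed.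

Lemma dot0l n (w : 'cV[R]_n) : dot 0 w = 0.
Proof. by rewrite /dot big1 // => i _; rewrite mxE mul0r. Qed.

Lemma dotNl n (u w : 'cV[R]_n) : dot (- u) w = - dot u w.
Proof. by rewrite -scaleN1r dotZl mulN1r. Qed.

Lemma dotBl n (u v w : 'cV[R]_n) : dot (u - v) w = dot u w - dot v w.
Proof. by rewrite dotDl dotNl. Qed.

Lemma dotDr n (u v w : 'cV[R]_n) : dot w (u + v) = dot w u + dot w v.
Proof. by rewrite !(dotC w) dotDl. Qed.

Lemma dotZr n a (u w : 'cV[R]_n) : dot w (a *: u) = a * dot w u.
Proof. by rewrite !(dotC w) dotZl. Qed.

Lemma dotBr n (u v w : 'cV[R]_n) : dot w (u - v) = dot w u - dot w v.
Proof. by rewrite !(dotC w) dotBl. Qed.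

Lemma dot_sum n (I : Type) (r : seq I) (P : pred I) (F : I -> 'cV[R]_n) w :
  dot (\sum_(i <- r | P i) F i) w = \sum_(i <- r | P i) dot (F i) w.
Proof. exact: (big_morph (fun u => dot u w) (fun u v => dotDl u v w) (dot0l w)). Qed.

Lemma dot_ge0 n (u : 'cV[R]_n) : 0 <= dot u u.
Proof. by apply: sumr_ge0 => i _; rewrite -expr2 sqr_ge0. Qed.

Lemma dot_le0_eq0 n (u : 'cV[R]_n) : dot u u <= 0 -> u = 0.
Proof.
move=> h; have h0 : dot u u = 0 by apply: le_anti; rewrite h dot_ge0.
apply/matrixP => i j; rewrite (ord1 j) mxE; apply/eqP.
rewrite -[_ == 0]orbb -mulf_eq0; apply/eqP.
by apply: (psumr_eq0P _ h0) => // k _; rewrite -expr2 sqr_ge0.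
Qed.

Lemma dot_mulmx m n (M : 'M[R]_(m, n)) u h : dot u (M *m h) = dot (M^T *m u) h.
Proof.
rewrite /dot; under eq_bigr do rewrite mxE big_distrr.
rewrite exchange_big; apply: eq_bigr => j _; rewrite mxE big_distrl.
by apply: eq_bigr => i _; rewrite !mxE /=; ring.
Qed.

Lemma trmx_mul_dot n (g v : 'cV[R]_n) : (g^T *m v) 0 0 = dot g v.
Proof. by rewrite !mxE; apply: eq_bigr => i _; rewrite mxE. Qed.

Lemma sqnorm_dot n (v : 'cV[R]_n) : sqnorm v = dot v v.
Proof. by apply: eq_bigr => i _; rewrite expr2. Qed.

End Dot.

Section Farkas.
Variables (R : realType) (n : nat).
Implicit Types (a c d g v w : 'cV[R]_n) (s : seq 'cV[R]_n).

(** [cone s c]: [c] is a nonnegative combination of the vectors of [s]. *)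
Fixpoint cone s c : Prop :=
  if s is a :: s' then exists2 t, 0 <= t & cone s' (c - t *: a) else c = 0.

Lemma cone_cat s1 s2 v :
  cone (s1 ++ s2) v -> exists v1 v2, [/\ cone s1 v1, cone s2 v2 & v = v1 + v2].
Proof.
elim: s1 v => [|a s IH] v /=; first by move=> h; exists 0, v; rewrite add0r.
case=> t ht /IH [v1 [v2 [h1 h2 e]]]; exists (v1 + t *: a), v2; split => //.
  by exists t => //; rewrite addrK.
by rewrite addrAC -e subrK.
Qed.

Lemma cone_dot_le0 s v d :
  cone s v -> (forall g, g \in s -> dot g d <= 0) -> dot v d <= 0.
Proof.
elim: s v => [|a s IH] v /=; first by move=> -> _; rewrite dot0l.
case=> t ht hc hs; rewrite -(subrK (t *: a) v) dotDl dotZl.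
have h1 : dot (v - t *: a) d <= 0.
  by apply: IH => // g gs; apply: hs; rewrite in_cons gs orbT.
have h2 : t * dot a d <= 0 by apply: mulr_ge0_le0 => //; apply: hs; rewrite mem_head.
lra.
Qed.

Lemma cone_map_proj s (al : R) d a v :
  cone [seq al *: g - dot g d *: a | g <- s] v ->
  exists2 w, cone s w & v = al *: w - dot w d *: a.
Proof.
elim: s v => [|g s IH] v /=.
  by move=> ->; exists 0 => //; rewrite scaler0 dot0l scale0r subr0.
case=> t ht /IH [w hw e]; exists (w + t *: g); first by exists t => //; rewrite addrK.
apply/matrixP => i j; have := congr1 (fun M : 'cV[R]_n => M i j) e.
by rewrite !mxE dotDl dotZl => e'; lra.
Qed.

(* Projecting along [a] parallel to [d] keeps the Farkas condition, with one
   generator fewer: test [d'] against the corrected direction [d''] below. *)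
Lemma farkas_proj a s c d :
  (forall d', (forall g, g \in a :: s -> dot g d' <= 0) -> dot c d' <= 0) ->
  0 < dot a d ->
  forall d', (forall g, g \in [seq dot a d *: g - dot g d *: a | g <- s] ->
                        dot g d' <= 0) ->
  dot (dot a d *: c - dot c d *: a) d' <= 0.
Proof.
move=> H hal d' hd'; set al := dot a d; set d'' := d' - (dot a d' / al) *: d.
have alN0 : al != 0 by rewrite gt_eqF.
have key : dot c d'' <= 0.
  apply: H => g; rewrite in_cons => /orP [/eqP ->|gs].
    by rewrite /d'' dotBr dotZr -/al mulfVK // subrr.
  have := hd' _ (map_f (fun g => al *: g - dot g d *: a) gs).
  rewrite dotBl !dotZl => hf.
  have -> : dot g d'' = (al * dot g d' - dot g d * dot a d') / al.
    by rewrite /d'' dotBr dotZr; field.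
  by rewrite pmulr_lle0 ?invr_gt0.
move: key; rewrite /d'' dotBr dotZr dotBl !dotZl => key.
have -> : al * dot c d' - dot c d * dot a d'
        = al * (dot c d' - dot a d' / al * dot c d) by field.
by rewrite pmulr_rle0.
Qed.

Lemma cone_cons_lift a s c d w :
  0 < dot a d -> dot w d <= dot c d -> cone s w ->
  dot a d *: c - dot c d *: a = dot a d *: w - dot w d *: a -> cone (a :: s) c.
Proof.
move=> hal hwc hw e; exists ((dot c d - dot w d) / dot a d).
  by rewrite divr_ge0 ?subr_ge0 // ltW.
suff -> : c - ((dot c d - dot w d) / dot a d) *: a = w by [].
apply/matrixP => i j; have := congr1 (fun M : 'cV[R]_n => M i j) e.
rewrite !mxE => e'; apply: (mulfI (lt0r_neq0 hal)).
have -> : dot a d * w i j = dot a d * c i j - dot c d * a i j + dot w d * a i j.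
  by lra.
by field; apply: lt0r_neq0.
Qed.

Lemma farkas s c :
  (forall d, (forall g, g \in s -> dot g d <= 0) -> dot c d <= 0) -> cone s c.
Proof.
have [k] := ubnP (size s); elim: k s c => // k IHk [|a s] c /= hsz H.
  by apply: dot_le0_eq0; apply: H => g; rewrite in_nil.
have [Hs|Hn] := classic (forall d, (forall g, g \in s -> dot g d <= 0) ->
                                   dot c d <= 0).
  by exists 0 => //; rewrite scale0r subr0; apply: IHk.
have [d [Hd Hcd]] : exists d, (forall g, g \in s -> dot g d <= 0) /\ 0 < dot c d.
  apply: NNPP => hne; apply: Hn => d hd; rewrite leNgt; apply/negP => hlt.
  by apply: hne; exists d.
have hal : 0 < dot a d.
  rewrite ltNge; apply/negP => hle; suff : dot c d <= 0 by rewrite leNgt Hcd.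
  by apply: H => g; rewrite in_cons => /orP [/eqP ->|/Hd].
have /cone_map_proj [w hw e] : cone [seq dot a d *: g - dot g d *: a | g <- s]
                                    (dot a d *: c - dot c d *: a).
  by apply: IHk (farkas_proj H hal); rewrite size_map.
by apply: (cone_cons_lift hal _ hw e); rewrite (le_trans (cone_dot_le0 hw Hd)) ?ltW.
Qed.

End Farkas.

Section MaxLinear.
Variables (R : realType) (n : nat).
Implicit Types (a c d x y z : 'cV[R]_n) (L : seq 'cV[R]_n) (f : 'cV[R]_n -> R).

Definition maxlin f L : Prop :=
  (forall a, a \in L -> forall x, dot a x <= f x) /\
  (forall x, exists2 a, a \in L & dot a x = f x).

Lemma maxlin_ext f g L : f =1 g -> maxlin f L -> maxlin g L.
Proof.
move=> e [h1 h2]; split=> [a aL x|x]; first by rewrite -e; apply: h1.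
by have [a aL ea] := h2 x; exists a => //; rewrite -e.
Qed.

Lemma maxlinD f g L1 L2 :
  maxlin f L1 -> maxlin g L2 ->
  maxlin (fun x => f x + g x) [seq a + b | a <- L1, b <- L2].
Proof.
move=> [f1 f2] [g1 g2]; split.
  by move=> _ /allpairsP [[a b] [/= aL bL ->]] x; rewrite dotDl lerD ?f1 ?g1.
move=> x; have [a aL ea] := f2 x; have [b bL eb] := g2 x.
by exists (a + b); [apply: allpairs_f | rewrite dotDl ea eb].
Qed.

Lemma maxlin_sum (I : Type) (r : seq I) (P : pred I) (F : I -> 'cV[R]_n -> R) :
  (forall i, exists L, maxlin (F i) L) ->
  exists L, maxlin (fun x => \sum_(i <- r | P i) F i x) L.
Proof.
move=> hF; elim: r => [|i r [L hL]].
  exists [:: 0]; split=> [a|x]; last by exists 0; rewrite ?inE ?dot0l ?big_nil.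
  by rewrite inE => /eqP -> x; rewrite dot0l big_nil.
case hP : (P i); last by exists L; apply: (maxlin_ext _ hL) => x; rewrite big_cons hP.
have [L' hL'] := hF i; exists [seq a + b | a <- L', b <- L].
by apply: (maxlin_ext _ (maxlinD hL' hL)) => x; rewrite big_cons hP.
Qed.

Lemma maxlin_norm_dot c : maxlin (fun x => `|dot c x|) [:: c; - c].
Proof.
split=> [a|x].
  rewrite !inE => /orP [] /eqP -> x; first exact: ler_norm.
  by rewrite dotNl -normrN ler_norm.
have [h|h] := leP 0 (dot c x); first by exists c; rewrite ?mem_head ?ger0_norm.
by exists (- c); rewrite ?inE ?eqxx ?orbT // dotNl ltr0_norm.
Qed.

Lemma maxlin_norm1 m (M : 'M[R]_(m, n)) : exists L, maxlin (fun x => norm1 (M *m x)) L.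
Proof.
have [L hL] := maxlin_sum (index_enum 'I_m) xpredT
  (fun i => ex_intro _ _ (maxlin_norm_dot (row i M)^T)).
exists L; apply: (maxlin_ext _ hL) => x; apply: eq_bigr => i _; congr `|_|.
by rewrite !mxE; apply: eq_bigr => j _; rewrite !mxE.
Qed.

Lemma maxlin_TV (p : 'I_n -> nat) (Dop : forall i, 'M[R]_(p i, n)) :
  exists L, maxlin (TV Dop) L.
Proof.
have [L hL] := maxlin_sum (index_enum 'I_n) xpredT (fun i => maxlin_norm1 (Dop i)).
by exists L; apply: maxlin_ext hL.
Qed.

Lemma maxlin_convex f L y z e : maxlin f L -> 0 <= e -> e <= 1 ->
  f (y + e *: (z - y)) <= (1 - e) * f y + e * f z.
Proof.
move=> [h1 h2] he0 he1; have [a aL <-] := h2 (y + e *: (z - y)).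
rewrite dotDr dotZr dotBr.
have q1 : (1 - e) * dot a y <= (1 - e) * f y by rewrite ler_wpM2l ?subr_ge0 ?h1.
have q2 : e * dot a z <= e * f z by rewrite ler_wpM2l ?h1.
lra.
Qed.

Lemma maxlin_step_le f L y d e s :
  maxlin f L -> 0 < e -> f y <= s ->
  (forall a, a \in L -> dot a y = s -> dot a d <= 0) ->
  (forall a, a \in L -> dot a y - s < 0 -> dot a y - s + e * `|dot a d| <= 0) ->
  f (y + e *: d) <= s.
Proof.
move=> [h1 h2] he hfy hact hinact; have [a aL <-] := h2 (y + e *: d).
rewrite dotDr dotZr; have hay : dot a y <= s := le_trans (h1 a aL y) hfy.
have [hs|hs] := eqVneq (dot a y) s.
  by have := mulr_ge0_le0 (ltW he) (hact a aL hs); lra.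
have := hinact a aL ltac:(by rewrite subr_lt0 lt_neqAle hs hay).
have := ler_wpM2l (ltW he) (ler_norm (dot a d)).
lra.
Qed.

End MaxLinear.

Lemma exists_step_bound (R : realType) (T : eqType) (L : seq T) (u v : T -> R) :
  exists2 e, 0 < e & forall a, a \in L -> u a < 0 -> u a + e * `|v a| <= 0.
Proof.
elim: L => [|b L [e he H]]; first by exists 1 => // a; rewrite in_nil.
have [hb|hb] := ltP (u b) 0; last first.
  by exists e => // a; rewrite in_cons => /orP [/eqP ->|/H//]; rewrite ltNge hb.
set k := - u b / (`|v b| + 1).
have hk : 0 < k by rewrite divr_gt0 ?oppr_gt0 ?ltr_wpDl.
exists (Order.min e k); first by rewrite lt_min he hk.
have hme : Order.min e k <= e by rewrite ge_min lexx.
have hmk : Order.min e k <= k by rewrite ge_min lexx orbT.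
have hm0 : 0 <= Order.min e k by rewrite le_min !ltW.
move=> a; rewrite in_cons => /orP [/eqP ->|aL] ha.
  have : Order.min e k * (`|v b| + 1) <= - u b by rewrite -ler_pdivlMr ?ltr_wpDl.
  by rewrite mulrDr mulr1; lra.
have := H a aL ha.
have : Order.min e k * `|v a| <= e * `|v a| by rewrite ler_wpM2r.
lra.
Qed.

Section LinearProgram.
Variables (R : realType) (n : nat).
Implicit Types (a c d v x y z : 'cV[R]_n) (s : seq 'cV[R]_n) (f : 'cV[R]_n -> R).

Lemma cone_active_bound s v f y r :
  cone s v -> (forall a, a \in s -> (forall x, dot a x <= f x) /\ dot a y = r) ->
  exists2 l, 0 <= l & (forall x, dot v x <= l * f x) /\ dot v y = l * r.
Proof.
elim: s v => [|a s IH] v /=.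
  by move=> -> _; exists 0 => //; split => [x|]; rewrite dot0l mul0r.
case=> t ht hc hs; have [ha1 ha2] := hs a (mem_head _ _).
have [l hl [h1 h2]] := IH _ hc (fun g gs => hs g (@mem_behead _ (a :: s) g gs)).
exists (l + t); first by rewrite addr_ge0.
split=> [x|]; rewrite -(subrK (t *: a) v) dotDl dotZl; last by rewrite h2 ha2; ring.
have := h1 x; have := ler_wpM2l ht (ha1 x); lra.
Qed.

Section TwoConstraints.
Variables (f1 f2 : 'cV[R]_n -> R) (L1 L2 : seq 'cV[R]_n) (c y : 'cV[R]_n) (s1 s2 : R).
Hypotheses (hL1 : maxlin f1 L1) (hL2 : maxlin f2 L2).
Hypotheses (hy1 : f1 y <= s1) (hy2 : f2 y <= s2).
Hypothesis ymin : forall z, f1 z <= s1 -> f2 z <= s2 -> dot c y <= dot c z.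

Let active1 := [seq a <- L1 | dot a y == s1].
Let active2 := [seq a <- L2 | dot a y == s2].

(* A direction [d] that does not increase the active forms is feasible for a
   short step, so [dot c d >= 0] by minimality: Farkas applies to [- c]. *)
Lemma cone_active_oppc : cone (active1 ++ active2) (- c).
Proof.
apply: farkas => d hd; rewrite dotNl oppr_le0.
have [e he H] := exists_step_bound
  ([seq (a, s1) | a <- L1] ++ [seq (a, s2) | a <- L2])
  (fun q => dot q.1 y - q.2) (fun q => dot q.1 d).
have hz1 : f1 (y + e *: d) <= s1.
  apply: (maxlin_step_le hL1 he hy1) => a aL.
    by move=> ha; apply: hd; rewrite mem_cat mem_filter ha eqxx aL.
  by move=> ha; apply: (H (a, s1)) => //; rewrite mem_cat map_f.
have hz2 : f2 (y + e *: d) <= s2.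
  apply: (maxlin_step_le hL2 he hy2) => a aL.
    by move=> ha; apply: hd; rewrite mem_cat !mem_filter ha eqxx aL orbT.
  by move=> ha; apply: (H (a, s2)) => //; rewrite mem_cat map_f ?orbT.
have := ymin hz1 hz2; rewrite dotDr dotZr -subr_ge0 addrC addKr.
by rewrite pmulr_rge0.
Qed.

Lemma linear_min_multipliers :
  exists l1 l2, [/\ 0 <= l1, 0 <= l2 &
    forall z, dot c y + l1 * f1 y + l2 * f2 y <= dot c z + l1 * f1 z + l2 * f2 z].
Proof.
have [v1 [v2 [hv1 hv2 ev]]] := cone_cat cone_active_oppc.
have bound f L (r : R) v : maxlin f L -> cone [seq a <- L | dot a y == r] v ->
    exists2 l, 0 <= l & (forall x, dot v x <= l * f x) /\ dot v y = l * r.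
  move=> [hf _] hv; apply: (cone_active_bound hv) => a.
  by rewrite mem_filter => /andP [/eqP ha aL]; split => //; apply: hf.
have [l1 hl1 [b1 e1]] := bound _ _ _ _ hL1 hv1.
have [l2 hl2 [b2 e2]] := bound _ _ _ _ hL2 hv2.
exists l1, l2; split => // z.
have hc x : dot c x = - dot v1 x - dot v2 x.
  by rewrite -[c]opprK ev dotNl dotDl opprD.
rewrite !hc; have := b1 z; have := b2 z.
have := ler_wpM2l hl1 hy1; have := ler_wpM2l hl2 hy2.
lra.
Qed.

End TwoConstraints.
End LinearProgram.

Lemma ge0_of_forall_step (R : realType) (g q : R) :
  0 <= q -> (forall e, 0 < e -> e <= 1 -> 0 <= g + e * q) -> 0 <= g.
Proof.
move=> hq H; have [//|hg] := leP 0 g.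
have hqg : 0 < q - g by lra.
have he : 0 < - g / (q - g) by rewrite divr_gt0 ?oppr_gt0.
have he1 : - g / (q - g) <= 1 by rewrite ler_pdivrMr // mul1r; lra.
have := mulr_ge0 (H _ he he1) (ltW hqg).
have : - g / (q - g) * (q - g) = - g by rewrite divfK ?gt_eqF.
nra.
Qed.

Section LeastSquares.
Variables (R : realType) (n m : nat) (A : 'M[R]_(m, n)) (b : 'cV[R]_m).
Implicit Types (y z : 'cV[R]_n).

Let grad y := A^T *m (A *m y - b).

Lemma LStr_expand y z :
  LStr A b z = LStr A b y + dot (grad y) (z - y)
               + 2^-1 * dot (A *m (z - y)) (A *m (z - y)).
Proof.
rewrite /LStr !sqnorm_dot -dot_mulmx.
have -> : A *m z - b = (A *m y - b) + A *m (z - y).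
  by rewrite mulmxBr [RHS]addrC subrKA.
set u := A *m y - b; set w := A *m (z - y).
rewrite [dot (u + w) _]dotDl [dot u _]dotDr [dot w _]dotDr (dotC w u).
by field.
Qed.

Lemma LStr_grad_le y z : LStr A b y + dot (grad y) (z - y) <= LStr A b z.
Proof.
rewrite (LStr_expand y z) lerDl.
by rewrite mulr_ge0 ?invr_ge0 ?dot_ge0.
Qed.

(* The quadratic remainder is negligible for short steps. *)
Lemma LStr_min_grad_ge0 (C : 'cV[R]_n -> Prop) y z :
  (forall e, 0 < e -> e <= 1 -> C (y + e *: (z - y))) ->
  (forall z', C z' -> LStr A b y <= LStr A b z') ->
  0 <= dot (grad y) (z - y).
Proof.
move=> hseg ymin; set q := 2^-1 * dot (A *m (z - y)) (A *m (z - y)).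
apply: (@ge0_of_forall_step _ _ q); first by rewrite mulr_ge0 ?invr_ge0 ?dot_ge0.
move=> e he he1; have := ymin _ (hseg e he he1).
rewrite (LStr_expand y (y + _)) [y + _ - y]addrC addKr -scalemxAr.
rewrite !(dotZl, dotZr) => h.
rewrite -(pmulr_rge0 _ he).
have -> : e * (dot (grad y) (z - y) + e * q)
        = e * dot (grad y) (z - y) + 2^-1 * (e * (e * dot (A *m (z - y)) (A *m (z - y)))).
  by rewrite /q; ring.
lra.
Qed.

End LeastSquares.

Section Bilevel.
Variables (R : realType) (n d m1 : nat) (p : 'I_n -> nat).
Variables (Psi : 'M[R]_(d, n)) (Dop : forall i : 'I_n, 'M[R]_(p i, n)).
Variables (Phitr : 'M[R]_(m1, n)) (btr : 'cV[R]_m1).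

Lemma norm1_ge0 k (v : 'cV[R]_k) : 0 <= norm1 v.
Proof. by apply: sumr_ge0 => i _; rewrite normr_ge0. Qed.

Lemma TV_ge0 x : 0 <= TV Dop x.
Proof. by apply: sumr_ge0 => i _; rewrite norm1_ge0. Qed.

Lemma subdiff_mulmx k (M : 'M[R]_(k, n)) x z g :
  subdiff (@norm1 R k) (M *m x) g ->
  norm1 (M *m x) + dot (M^T *m g) (z - x) <= norm1 (M *m z).
Proof. by move/(_ (M *m z)); rewrite trmx_mul_dot -mulmxBr dot_mulmx. Qed.

(* KKT conditions are sufficient: each term of the penalized objective lies
   above its linearization, and the linearizations add up to zero. *)
Lemma P1_feas_of_Mset r x xi :
  Mset Psi Dop Phitr btr r x xi -> P1_feas Psi Dop Phitr btr x xi.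
Proof.
move=> [[hxi1 hxi2] [[g [h [hg [hh hstat]]]] _]]; split=> // z.
have hN := subdiff_mulmx z hg.
have hT : TV Dop x + dot (\sum_(i < n) (Dop i)^T *m h i) (z - x) <= TV Dop z.
  by rewrite /TV dot_sum -big_split; apply: ler_sum => i _; apply: subdiff_mulmx.
have := congr1 (fun v => dot v (z - x)) hstat; rewrite /= !dotDl !dotZl dot0l.
have := LStr_grad_le Phitr btr x z.
have := ler_wpM2l hxi1 hN; have := ler_wpM2l hxi2 hT.
rewrite /objP !mulrDr; lra.
Qed.

Lemma P2_feas_Qmap x mu :
  P1_feas Psi Dop Phitr btr x mu -> P2_feas Psi Dop Phitr btr x (Qmap Psi Dop x).
Proof.
move=> [[hmu1 hmu2] hsp]; split; first by split; [apply: norm1_ge0 | apply: TV_ge0].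
split=> [//|z [/= hz1 hz2]]; have := hsp z; rewrite /objP.
have := ler_wpM2l hmu1 hz1; have := ler_wpM2l hmu2 hz2.
lra.
Qed.

Lemma feasC_segment s y z e :
  feasC Psi Dop s y -> feasC Psi Dop s z -> 0 <= e -> e <= 1 ->
  feasC Psi Dop s (y + e *: (z - y)).
Proof.
move=> [hy1 hy2] [hz1 hz2] he0 he1.
have [[L1 hL1] [L2 hL2]] := (maxlin_norm1 Psi, maxlin_TV Dop).
have e1 : 0 <= 1 - e by rewrite subr_ge0.
have := maxlin_convex y z hL1 he0 he1; have := maxlin_convex y z hL2 he0 he1.
have := ler_wpM2l e1 hy1; have := ler_wpM2l e1 hy2.
have := ler_wpM2l he0 hz1; have := ler_wpM2l he0 hz2.
by rewrite /feasC; lra.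
Qed.

Lemma P1_feas_of_Sc s y : Sc Psi Dop Phitr btr s y ->
  exists mu, P1_feas Psi Dop Phitr btr y mu.
Proof.
move=> [[hy1 hy2] ymin].
have [[L1 hL1] [L2 hL2]] := (maxlin_norm1 Psi, maxlin_TV Dop).
set G := Phitr^T *m (Phitr *m y - btr).
have Gmin z : norm1 (Psi *m z) <= s.1 -> TV Dop z <= s.2 -> dot G y <= dot G z.
  move=> hz1 hz2; rewrite -subr_ge0 -dotBr.
  apply: (LStr_min_grad_ge0 (C := feasC Psi Dop s)) => // e he he1.
  exact: feasC_segment (conj hy1 hy2) (conj hz1 hz2) (ltW he) he1.
have [l1 [l2 [hl1 hl2 H]]] := linear_min_multipliers hL1 hL2 hy1 hy2 Gmin.
exists (l1, l2); split=> // z; have := H z.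
have := LStr_grad_le Phitr btr y z; rewrite dotBr -/G /objP /=.
lra.
Qed.

End Bilevel.

Theorem mainTheorem3 (R : realType) (n d m1 m2 : nat) (p : 'I_n -> nat)
  (Psi : 'M[R]_(d, n)) (Dop : forall i : 'I_n, 'M[R]_(p i, n))
  (Phitr : 'M[R]_(m1, n)) (btr : 'cV[R]_m1)
  (Phival : 'M[R]_(m2, n)) (bval : 'cV[R]_m2) :
  (* (i) *)
  (forall (xbar : 'cV[R]_n) (rbar xibar : R * R),
     P2_opt Psi Dop Phitr btr Phival bval xbar rbar ->
     Mset Psi Dop Phitr btr rbar xbar xibar ->
     P1_opt Psi Dop Phitr btr Phival bval xbar xibar) /\
  (* (ii) *)
  (forall Dset : 'cV[R]_n -> R * R -> Prop,
     dense_subset Dset ->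
     (forall x r, Dset x r -> exists x' xi, Mset Psi Dop Phitr btr r x' xi) ->
     forall (xbar : 'cV[R]_n) (lbar : R * R),
       P1_opt Psi Dop Phitr btr Phival bval xbar lbar ->
       P2_opt Psi Dop Phitr btr Phival bval xbar (Qmap Psi Dop xbar)).
Proof.
split.
  move=> xbar rbar xibar [_ xopt] hM; split; first exact: P1_feas_of_Mset hM.
  by move=> y mu /P2_feas_Qmap; apply: xopt.
move=> Dset _ _ xbar lbar [hx xopt]; split; first exact: P2_feas_Qmap hx.
by move=> y s [_ /P1_feas_of_Sc [mu]]; apply: xopt.
Qed.
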